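(* Let $A=(a_{n,k})$ be a real matrix with $a_{n,k}\ge0$ and $\sum_{k=0}^\infty a_{n,k}=1$ for every $n$, let $r\in\mathbb{N}$, $n\ge0$, and let $t\in\mathbb{R}$ with $t\neq\frac{2l\pi}{r}$ for all $l\in\mathbb{Z}$. Then $$\left|\sum_{k=0}^{\infty}a_{n,k}D^{\circ}_{k,1}(t)\right|\le\frac{1}{2\left|\sin\frac t2\sin\frac{rt}2\right|}\left(A_{n,r}+\sum_{k=0}^{r-1}a_{n,k}\right)\le\frac{1}{\left|\sin\frac t2\sin\frac{rt}2\right|}A_{n,r}.$$
   Context: $D^{\circ}_{k,1}(t)=\dfrac{\sin\frac{(2k+1)t}{2}}{2\sin\frac t2}$ and $A_{n,r}=\sum_{k=0}^\infty|a_{n,k}-a_{n,k+r}|$. *)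

From Stdlib Require Import Reals.
From Coquelicot Require Import Coquelicot.
Open Scope R_scope.

Definition Dker (k : nat) (t : R) : R :=
  sin ((2 * INR k + 1) * t / 2) / (2 * sin (t / 2)).

Definition Anr (a : nat -> nat -> R) (n r : nat) : R :=
  Series (fun k => Rabs (a n k - a n (k + r)%nat)).

(* Writing [S = sin (r t / 2)], the product-to-sum formula gives
   [4 sin (t/2) S D°_{k,1}(t) = c_k - c_{k+r}] with [c_k = cos ((2k+1-r) t / 2)].
   Shifting the second series by [r] turns [sum_k a_k (c_k - c_{k+r})] into
   [sum_{k<r} a_k c_k + sum_k (a_{k+r} - a_k) c_{k+r}], which is bounded by
   [sum_{k<r} a_k + A_{n,r}] since [|c_k| <= 1]. Finally [sum_{k<r} a_k] is the
   telescoping sum [sum_k (a_k - a_{k+r})], hence at most [A_{n,r}]. The argument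
   even yields the factor [1 / (4 |sin (t/2) S|)] in the first inequality. *)
From Stdlib Require Import Reals Lra Lia.
From Coquelicot Require Import Coquelicot.
Open Scope R_scope.

Section BoundedMultiplier.

Variables (u c : nat -> R).
Hypothesis Hu : ex_series (fun k => Rabs (u k)).
Hypothesis Hc : forall k, Rabs (c k) <= 1.

Lemma Rabs_mul_bounded_le k : Rabs (u k * c k) <= Rabs (u k).
Proof.
  rewrite Rabs_mult. rewrite <- (Rmult_1_r (Rabs (u k))) at 2.
  apply Rmult_le_compat_l; [apply Rabs_pos | apply Hc].
Qed.

Lemma ex_series_Rabs_mul_bounded : ex_series (fun k => Rabs (u k * c k)).
Proof.
  apply (@ex_series_le _ R_CompleteNormedModule _ (fun k => Rabs (u k))); [|exact Hu].
  intro k. rewrite Rabs_Rabsolu. apply Rabs_mul_bounded_le.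
Qed.

Lemma ex_series_mul_bounded : ex_series (fun k => u k * c k).
Proof. exact (@ex_series_le _ R_CompleteNormedModule _ _ Rabs_mul_bounded_le Hu). Qed.

Lemma Rabs_Series_mul_bounded_le :
  Rabs (Series (fun k => u k * c k)) <= Series (fun k => Rabs (u k)).
Proof.
  apply (Rle_trans _ _ _ (Series_Rabs _ ex_series_Rabs_mul_bounded)).
  apply Series_le; [|exact Hu].
  intro k. split; [apply Rabs_pos | apply Rabs_mul_bounded_le].
Qed.

End BoundedMultiplier.

Section ShiftDifference.

Variables (b : nat -> R) (r : nat).
Hypothesis Hb : ex_series (fun k => Rabs (b k)).

Lemma ex_series_Rabs_shift : ex_series (fun k => Rabs (b (k + r)%nat)).
Proof.
  apply (ex_series_ext (fun k => Rabs (b (r + k)%nat))).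
  - intro k. now rewrite Nat.add_comm.
  - now apply (ex_series_incr_n (fun k => Rabs (b k))).
Qed.

Lemma ex_series_Rabs_sub_shift : ex_series (fun k => Rabs (b k - b (k + r)%nat)).
Proof.
  apply (@ex_series_le _ R_CompleteNormedModule _ (fun k => Rabs (b k) + Rabs (b (k + r)%nat))).
  - intro k. rewrite Rabs_Rabsolu, <- (Rabs_Ropp (b (k + r)%nat)). apply Rabs_triang.
  - apply (ex_series_plus (fun k => Rabs (b k))); [exact Hb | exact ex_series_Rabs_shift].
Qed.

Lemma ex_series_Rabs_shift_sub : ex_series (fun k => Rabs (b (k + r)%nat - b k)).
Proof.
  apply (ex_series_ext _ _ (fun k => Rabs_minus_sym _ _)), ex_series_Rabs_sub_shift.
Qed.

Variable c : nat -> R.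
Hypothesis Hc : forall k, Rabs (c k) <= 1.
Hypothesis Hr : (0 < r)%nat.

Lemma Series_mul_sub_shift :
  Series (fun k => b k * (c k - c (k + r)%nat))
  = sum_n (fun k => b k * c k) (pred r)
    + Series (fun k => (b (k + r)%nat - b k) * c (k + r)%nat).
Proof.
  assert (Hc_shift : forall k, Rabs (c (k + r)%nat) <= 1) by (intro k; apply Hc).
  pose proof (ex_series_mul_bounded _ _ Hb Hc) as Hbc.
  rewrite (Series_ext _ (fun k => b k * c k - b k * c (k + r)%nat))
    by (intro k; ring).
  rewrite Series_minus, (Series_incr_n _ r Hr Hbc), <- sum_n_Reals;
    [| exact Hbc | exact (ex_series_mul_bounded _ _ Hb Hc_shift)].
  rewrite (Series_ext (fun k => (b (k + r)%nat - b k) * c (k + r)%nat)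
                      (fun k => b (k + r)%nat * c (k + r)%nat - b k * c (k + r)%nat))
    by (intro k; ring).
  rewrite Series_minus;
    [| exact (ex_series_mul_bounded _ _ ex_series_Rabs_shift Hc_shift)
     | exact (ex_series_mul_bounded _ _ Hb Hc_shift)].
  rewrite (Series_ext (fun k => b (r + k)%nat * c (r + k)%nat)
                      (fun k => b (k + r)%nat * c (k + r)%nat))
    by (intro k; now rewrite Nat.add_comm).
  ring.
Qed.

Lemma Rabs_Series_mul_sub_shift_le :
  Rabs (Series (fun k => b k * (c k - c (k + r)%nat)))
  <= sum_n (fun k => Rabs (b k)) (pred r) + Series (fun k => Rabs (b k - b (k + r)%nat)).
Proof.
  rewrite Series_mul_sub_shift.
  apply (Rle_trans _ _ _ (Rabs_triang _ _)), Rplus_le_compat.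
  - rewrite !sum_n_Reals. apply (Rle_trans _ _ _ (sum_f_R0_triangle _ _)).
    apply sum_Rle. intros k _. now apply Rabs_mul_bounded_le.
  - rewrite (Series_ext (fun k => Rabs (b k - b (k + r)%nat))
                        (fun k => Rabs (b (k + r)%nat - b k)))
      by (intro k; apply Rabs_minus_sym).
    apply (Rabs_Series_mul_bounded_le _ (fun k => c (k + r)%nat)
             ex_series_Rabs_shift_sub (fun k => Hc _)).
Qed.

Lemma sum_n_le_Series_Rabs_sub_shift :
  sum_n b (pred r) <= Series (fun k => Rabs (b k - b (k + r)%nat)).
Proof.
  assert (Hb' : ex_series b) by now apply ex_series_Rabs.
  assert (Hb_shift : ex_series (fun k => b (k + r)%nat))
    by apply ex_series_Rabs, ex_series_Rabs_shift.
  (* Without [@eq R] the equation lives in the carrier of [R_AbelianMonoid]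
     and [ring] rejects it. *)
  assert (Htelescope : @eq R (sum_n b (pred r)) (Series (fun k => b k - b (k + r)%nat))).
  { rewrite Series_minus, (Series_incr_n _ r Hr Hb'), sum_n_Reals by assumption.
    rewrite (Series_ext (fun k => b (r + k)%nat) (fun k => b (k + r)%nat))
      by (intro k; now rewrite Nat.add_comm).
    ring. }
  rewrite Htelescope.
  exact (Rle_trans _ _ _ (Rle_abs _) (Series_Rabs _ ex_series_Rabs_sub_shift)).
Qed.

End ShiftDifference.

Definition shifted_cos (r : nat) (t : R) (k : nat) : R :=
  cos ((2 * INR k + 1 - INR r) * t / 2).

Lemma shifted_cos_bound r t k : Rabs (shifted_cos r t k) <= 1.
Proof. apply Rabs_le, COS_bound. Qed.

Lemma Dker_shifted_cos (r k : nat) (t : R) :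
  sin (t / 2) <> 0 -> sin (INR r * t / 2) <> 0 ->
  Dker k t = / (4 * (sin (t / 2) * sin (INR r * t / 2)))
             * (shifted_cos r t k - shifted_cos r t (k + r)).
Proof.
  intros Hs HS. unfold Dker, shifted_cos. rewrite form2, plus_INR.
  replace (((2 * INR k + 1 - INR r) * t / 2 - (2 * (INR k + INR r) + 1 - INR r) * t / 2) / 2)
    with (- (INR r * t / 2)) by field.
  replace (((2 * INR k + 1 - INR r) * t / 2 + (2 * (INR k + INR r) + 1 - INR r) * t / 2) / 2)
    with ((2 * INR k + 1) * t / 2) by field.
  rewrite sin_neg.
  field. auto.
Qed.

Section AwayFromLattice.

Variables (r : nat) (t : R).
Hypothesis Hr : (0 < r)%nat.
Hypothesis Ht : forall l : Z, t <> 2 * IZR l * PI / INR r.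

Lemma sin_half_neq_0 : sin (t / 2) <> 0.
Proof.
  intro H0. destruct (sin_eq_0_0 _ H0) as [k Hk].
  apply (Ht (k * Z.of_nat r)%Z).
  assert (0 < INR r) by (apply lt_0_INR; lia).
  rewrite mult_IZR, <- INR_IZR_INZ. field_simplify; lra.
Qed.

Lemma sin_mul_half_neq_0 : sin (INR r * t / 2) <> 0.
Proof.
  intro H0. destruct (sin_eq_0_0 _ H0) as [k Hk].
  apply (Ht k).
  assert (0 < INR r) by (apply lt_0_INR; lia).
  apply (Rmult_eq_reg_l (INR r)); [field_simplify; lra | lra].
Qed.

End AwayFromLattice.

Theorem lemma4 (a : nat -> nat -> R)
  (Hpos : forall n k, 0 <= a n k)
  (Hsum : forall n, is_series (a n) 1)
  (r : nat) (Hr : (0 < r)%nat) (n : nat) (t : R)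
  (Ht : forall l : Z, t <> 2 * IZR l * PI / INR r) :
  Rabs (Series (fun k => a n k * Dker k t))
    <= / (2 * Rabs (sin (t / 2) * sin (INR r * t / 2)))
         * (Anr a n r + sum_n (fun k => a n k) (pred r))
  /\ / (2 * Rabs (sin (t / 2) * sin (INR r * t / 2)))
         * (Anr a n r + sum_n (fun k => a n k) (pred r))
     <= / Rabs (sin (t / 2) * sin (INR r * t / 2)) * Anr a n r.
Proof.
  pose proof (sin_half_neq_0 r t Hr Ht) as Hs.
  pose proof (sin_mul_half_neq_0 r t Hr Ht) as HS.
  set (b := a n).
  set (q := Rabs (sin (t / 2) * sin (INR r * t / 2))).
  set (B := sum_n b (pred r)).
  assert (Hq : 0 < q)
    by now apply Rabs_pos_lt, Rmult_integral_contrapositive_currified.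
  assert (Hb : ex_series (fun k => Rabs (b k))).
  { apply (ex_series_ext b); [intro k; symmetry; apply Rabs_pos_eq, Hpos|].
    exists 1. apply Hsum. }
  assert (HB_abs : B = sum_n (fun k => Rabs (b k)) (pred r))
    by (apply sum_n_ext; intro k; symmetry; apply Rabs_pos_eq, Hpos).
  assert (HBA : B <= Anr a n r) by exact (sum_n_le_Series_Rabs_sub_shift b r Hb Hr).
  assert (HB0 : 0 <= B)
    by (unfold B; rewrite sum_n_Reals; apply cond_pos_sum; intro; apply Hpos).
  assert (Hkernel : Rabs (Series (fun k => b k * Dker k t)) <= / (4 * q) * (Anr a n r + B)).
  { rewrite (Series_ext _ (fun k => / (4 * (sin (t / 2) * sin (INR r * t / 2)))
                               * (b k * (shifted_cos r t k - shifted_cos r t (k + r)))))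
      by (intro k; rewrite (Dker_shifted_cos r) by assumption; ring).
    rewrite Series_scal_l, Rabs_mult, Rabs_inv, Rabs_mult, (Rabs_pos_eq 4) by lra.
    apply Rmult_le_compat_l; [apply Rlt_le, Rinv_0_lt_compat; fold q; lra|].
    rewrite HB_abs, Rplus_comm.
    exact (Rabs_Series_mul_sub_shift_le b r Hb _ (shifted_cos_bound r t) Hr). }
  split.
  - apply (Rle_trans _ _ _ Hkernel), Rmult_le_compat_r; [lra|].
    apply Rinv_le_contravar; lra.
  - replace (/ q * Anr a n r) with (/ (2 * q) * (2 * Anr a n r)) by (field; lra).
    apply Rmult_le_compat_l; [apply Rlt_le, Rinv_0_lt_compat|]; lra.
Qed.
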